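(* Let $K\ge2$, $r\in[0,1]^K$ with $r(1)>r(2)>\cdots>r(K)$, and fix $j\in\{2,\ldots,K\}$. Write $\varepsilon:=1-\pi(j)$. There exists $\bar\varepsilon>0$ such that on the sector $\mathcal S_{\bar\varepsilon}:=\{\pi:\ 0<\varepsilon<\bar\varepsilon,\ \pi(1)\ge\varepsilon/K\}$, along the EG flow: (1) $\frac{d}{dt}\log\frac{\pi(1)}{\pi(j)}\ge\frac{\Delta_{1j}}{4K}\varepsilon$; (2) $\dot\varepsilon>0$.
   Context: Softmax policy $\pi_\theta(a)=e^{\theta(a)}/\sum_{a'}e^{\theta(a')}$ with $\theta\in\mathbb{R}^K$; advantage $U(a):=r(a)-\pi_\theta^\top r$; $\Delta_{ab}:=r(a)-r(b)$. The EG flow is $\dot\theta(a)=\sum_{a'=1}^K\mathbf{1}\{U(a')>0\}\pi(a')U(a')(\mathbf{1}\{a=a'\}-\pi(a))$. *)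

From HB Require Import structures.
From mathcomp Require Import all_boot all_order all_algebra.
From mathcomp Require Import all_classical all_reals all_analysis.
Set Implicit Arguments. Unset Strict Implicit. Unset Printing Implicit Defensive.
Import Order.TTheory GRing.Theory Num.Theory.
Local Open Scope ring_scope.

Definition softmax (R : realType) (K : nat) (theta : 'I_K -> R) (a : 'I_K) : R :=
  expR (theta a) / \sum_(b < K) expR (theta b).

Definition advantage (R : realType) (K : nat) (r : 'I_K -> R)
  (theta : 'I_K -> R) (a : 'I_K) : R :=
  r a - \sum_(b < K) softmax theta b * r b.

Definition EG_field (R : realType) (K : nat) (r : 'I_K -> R)
  (theta : 'I_K -> R) (a : 'I_K) : R :=
  \sum_(a' < K)
    (if 0 < advantage r theta a'
     then softmax theta a' * advantage r theta a' *
          ((a == a')%:R - softmax theta a)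
     else 0).

Definition EG_flow_at (R : realType) (K : nat) (r : 'I_K -> R)
  (theta : R -> 'I_K -> R) (t : R) : Prop :=
  forall (a : 'I_K),
    is_derive t 1 (fun s => theta s a) (EG_field r (theta t) a).

From HB Require Import structures.
From mathcomp Require Import all_boot all_order all_algebra.
From mathcomp Require Import all_classical all_reals all_analysis.
From mathcomp Require Import ring lra.
Import Order.TTheory GRing.Theory Num.Theory.
Local Open Scope ring_scope.

(* Write w(a) := 1{U(a) > 0} pi(a) U(a), so that the EG field is
   thetadot(a) = w(a) - pi(a) sum_b w(b).  Near the vertex j, where
   eps = 1 - pi(j) is small, arm 1 keeps advantage U(1) >= (1 - eps) Delta_1j,
   while w(j) <= U(j) <= eps; hence thetadot(b) - thetadot(j) >= w(b) - 2 eps^2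
   for every b <> j.  The log-ratio log(pi(1)/pi(j)) = theta(1) - theta(j) thus
   grows at rate >= pi(1) (1 - eps) Delta_1j - 2 eps^2, and
   epsdot = pi(j) sum_b pi(b) (thetadot(b) - thetadot(j))
         >= pi(j) (pi(1) w(1) - 2 eps^3).
   With pi(1) >= eps/K, both bounds win as soon as eps < Delta_1j / (8 K^2). *)

Lemma ler_sum_term (R : numDomainType) (I : finType) (P : pred I) (F : I -> R) i :
  (forall j, P j -> 0 <= F j) -> P i -> F i <= \sum_(j | P j) F j.
Proof.
move=> F_ge0 Pi; rewrite (bigD1 i) //= lerDl.
by apply: sumr_ge0 => j /andP[/F_ge0].
Qed.

Section Softmax.
Context {R : realType} {K : nat}.
Hypothesis K_gt0 : (0 < K)%N.

Lemma sum_expR_gt0 (theta : 'I_K -> R) : 0 < \sum_b expR (theta b).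
Proof.
rewrite (bigD1 (Ordinal K_gt0)) //= ltr_wpDr ?expR_gt0 //.
by apply: sumr_ge0 => b _; apply/ltW/expR_gt0.
Qed.

Lemma softmax_gt0 (theta : 'I_K -> R) a : 0 < softmax theta a.
Proof. by rewrite divr_gt0 ?expR_gt0 ?sum_expR_gt0. Qed.

Lemma sum_softmax (theta : 'I_K -> R) : \sum_b softmax theta b = 1.
Proof. by rewrite -mulr_suml mulfV // gt_eqF ?sum_expR_gt0. Qed.

Lemma sum_softmax_neq (theta : 'I_K -> R) j :
  \sum_(b | b != j) softmax theta b = 1 - softmax theta j.
Proof. by rewrite -(sum_softmax theta) [in RHS](bigD1 j) //= addrC addrK. Qed.

Lemma softmax_le1 (theta : 'I_K -> R) a : softmax theta a <= 1.
Proof.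
rewrite -subr_ge0 -sum_softmax_neq; apply: sumr_ge0 => b _.
exact/ltW/softmax_gt0.
Qed.

Lemma softmax_le_compl (theta : 'I_K -> R) a b :
  a != b -> softmax theta a <= 1 - softmax theta b.
Proof.
move=> ab; rewrite -sum_softmax_neq; apply: ler_sum_term => // c _.
exact/ltW/softmax_gt0.
Qed.

Lemma ln_softmax_ratio (theta : 'I_K -> R) a b :
  ln (softmax theta a / softmax theta b) = theta a - theta b.
Proof.
rewrite /softmax -[RHS]expRK expRB; congr ln.
by field; rewrite !gt_eqF ?expR_gt0 ?sum_expR_gt0.
Qed.

Lemma is_derive_ln_softmax_ratio (theta : R -> 'I_K -> R) (v : 'I_K -> R)
    (t : R) a b :
  (forall c, is_derive t 1 (fun s => theta s c) (v c)) ->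
  is_derive t 1 (fun s => ln (softmax (theta s) a / softmax (theta s) b)) (v a - v b).
Proof.
move=> dtheta; have -> : (fun s => ln (softmax (theta s) a / softmax (theta s) b)) =
                      (fun s => theta s a) - (fun s => theta s b).
  by apply: funext => s; rewrite ln_softmax_ratio.
exact: is_deriveB.
Qed.

Lemma is_derive_softmax (theta : R -> 'I_K -> R) (v : 'I_K -> R)
    (t : R) (j : 'I_K) :
  (forall a, is_derive t 1 (fun s => theta s a) (v a)) ->
  is_derive t 1 (fun s => softmax (theta s) j)
    (softmax (theta t) j * (v j - \sum_b softmax (theta t) b * v b)).
Proof.
move=> dtheta.
have dexp b : is_derive t 1 (fun s => expR (theta s b)) (expR (theta t b) * v b).
  exact: (is_derive1_comp (f := expR) (g := fun s => theta s b)).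
have dZ : is_derive t 1 (fun s => \sum_b expR (theta s b))
                      (\sum_b expR (theta t b) * v b).
  have := is_derive_sum (h := fun b s => expR (theta s b)) dexp.
  by congr is_derive; apply: funext => s; rewrite fct_sumE.
have Z_gt0 := sum_expR_gt0 (theta t).
have := is_deriveM (dexp j) (is_deriveV (lt0r_neq0 Z_gt0) dZ).
congr is_derive; rewrite /softmax.
set Z := \sum_b expR (theta t b).
have -> : \sum_b expR (theta t b) / Z * v b = Z^-1 * \sum_b expR (theta t b) * v b.
  by rewrite mulr_sumr; apply: eq_bigr => b _; ring.
rewrite /GRing.scale /=; field; exact: lt0r_neq0.
Qed.

Lemma is_derive_one_sub_softmax (theta : R -> 'I_K -> R) (v : 'I_K -> R)
    (t : R) (j : 'I_K) :
  (forall a, is_derive t 1 (fun s => theta s a) (v a)) ->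
  is_derive t 1 (fun s => 1 - softmax (theta s) j)
    (softmax (theta t) j * \sum_b softmax (theta t) b * (v b - v j)).
Proof.
move=> dtheta; have := is_deriveB (is_derive_cst (1 : R) t 1)
  (is_derive_softmax _ _ _ j dtheta).
congr is_derive.
rewrite sub0r -mulrN opprB; congr (_ * _).
by rewrite (eq_bigr _ (fun b _ => mulrBr _ _ _)) sumrB -mulr_suml sum_softmax mul1r.
Qed.

End Softmax.

Definition EG_weight {R : realType} {K : nat} (r theta : 'I_K -> R) (a : 'I_K) : R :=
  if 0 < advantage r theta a then softmax theta a * advantage r theta a else 0.

Section EGField.
Context {R : realType} {K : nat}.
Variables (r theta : 'I_K -> R).
Hypothesis K_gt0 : (0 < K)%N.

Local Notation p := (softmax theta).
Local Notation w := (EG_weight r theta).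
Local Notation F := (EG_field r theta).

Lemma advantageE a : advantage r theta a = \sum_b p b * (r a - r b).
Proof.
rewrite (eq_bigr _ (fun b _ => mulrBr _ _ _)) sumrB -mulr_suml.
by rewrite sum_softmax // mul1r.
Qed.

Lemma advantage_ge_max a j :
  (forall b, r b <= r a) -> p j * (r a - r j) <= advantage r theta a.
Proof.
move=> ra_max; rewrite advantageE (bigD1 j) //= lerDl.
by apply: sumr_ge0 => b _; rewrite mulr_ge0 ?subr_ge0 // ltW ?softmax_gt0.
Qed.

Lemma advantage_le_compl j :
  (forall b, 0 <= r b <= 1) -> advantage r theta j <= 1 - p j.
Proof.
move=> r01; rewrite -(sum_softmax_neq K_gt0) advantageE (bigD1 j) //=.
rewrite subrr mulr0 add0r; apply: ler_sum => b _.
rewrite ler_piMr ?(ltW (softmax_gt0 K_gt0 theta b)) //.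
by have := r01 b; have := r01 j; lra.
Qed.

Lemma EG_weight_ge0 a : 0 <= w a.
Proof.
rewrite /EG_weight; case: ifP => // /ltW u_ge0.
by rewrite mulr_ge0 // ltW ?softmax_gt0.
Qed.

Lemma EG_fieldE a : F a = w a - p a * \sum_b w b.
Proof.
rewrite /EG_field mulr_sumr (bigD1 a) //= [in RHS](bigD1 a) //= eqxx.
rewrite opprD addrA; congr (_ + _).
  by rewrite /EG_weight mulr1n; case: ifP => _; ring.
rewrite -sumrN; apply: eq_bigr => b ba.
by rewrite eq_sym (negbTE ba) mulr0n /EG_weight; case: ifP => _; ring.
Qed.

Lemma EG_weight_ge_max a j :
  (forall b, r b <= r a) -> p a * p j * (r a - r j) <= w a.
Proof.
move=> ra_max; have adv_ge := advantage_ge_max a j ra_max.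
have pa_gt0 := softmax_gt0 K_gt0 theta a.
rewrite /EG_weight -mulrA; case: ltP => [_|adv_le0].
  by rewrite ler_wpM2l // ltW.
by rewrite pmulr_rle0 // (le_trans adv_ge).
Qed.

Lemma EG_weight_le_compl j : (forall b, 0 <= r b <= 1) -> w j <= 1 - p j.
Proof.
move=> r01; have adv_le := advantage_le_compl j r01.
rewrite /EG_weight; case: ltP => [adv_gt0|_].
  exact: le_trans (ler_piMl (ltW adv_gt0) (softmax_le1 K_gt0 theta j)) adv_le.
by rewrite subr_ge0 softmax_le1.
Qed.

Lemma EG_field_gap_ge b j : (forall c, 0 <= r c <= 1) -> b != j ->
  1 <= 2 * p j -> w b - 2 * (1 - p j) ^+ 2 <= F b - F j.
Proof.
move=> r01 bj pj_ge; rewrite !EG_fieldE.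
have pb_le := softmax_le_compl K_gt0 theta b j bj.
have wj_ge0 := EG_weight_ge0 j.
have wj_le := EG_weight_le_compl j r01.
have wj_le_sum : w j <= \sum_c w c.
  by apply: ler_sum_term => // c _; apply: EG_weight_ge0.
have gap_S : (p j - p b) * w j <= (p j - p b) * \sum_c w c.
  by rewrite ler_wpM2l // subr_ge0; lra.
have gap_w : (1 - p j + p b) * w j <= (2 * (1 - p j)) * (1 - p j).
  by rewrite ler_pM //; have := softmax_gt0 K_gt0 theta b; lra.
rewrite expr2; lra.
Qed.

Lemma sum_EG_field_gap_ge a j : (forall c, 0 <= r c <= 1) -> a != j ->
  1 <= 2 * p j -> p a * w a - 2 * (1 - p j) ^+ 3 <= \sum_b p b * (F b - F j).
Proof.
move=> r01 aj pj_ge; rewrite (bigD1 j) //= subrr mulr0 add0r.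
have -> : 2 * (1 - p j) ^+ 3 = \sum_(b | b != j) p b * (2 * (1 - p j) ^+ 2).
  by rewrite -mulr_suml sum_softmax_neq //; ring.
have pb_ge0 b : 0 <= p b by exact/ltW/softmax_gt0.
apply: le_trans (ler_sum _ (fun b bj =>
  ler_wpM2l (pb_ge0 b) (EG_field_gap_ge b j r01 bj pj_ge))).
rewrite (eq_bigr _ (fun b _ => mulrBr _ _ _)) sumrB lerD2r.
by apply: ler_sum_term => // b _; rewrite mulr_ge0 ?EG_weight_ge0.
Qed.

End EGField.

Lemma sector_bounds {R : realFieldType} {D k e q : R} :
  0 < D -> D <= 1 -> 2 <= k -> 0 < e -> e < D / (8 * k ^+ 2) -> e / k <= q ->
  [/\ 32 * e < D,
      D / (4 * k) * e <= q * (1 - e) * D - 2 * e ^+ 2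
    & 2 * e ^+ 3 < q * (q * (1 - e) * D)].
Proof.
move=> D_gt0 D_le1 k_ge2 e_gt0 e_lt q_ge.
have k_gt0 : 0 < k by lra.
have ekk_lt : 8 * (e * k * k) < D.
  by move: e_lt; rewrite ltr_pdivlMr ?expr2 ?mulr_gt0 //; lra.
have ek_lt : 16 * (e * k) < D.
  have : e * k * 2 <= e * k * k by rewrite ler_wpM2l // mulr_ge0 // ltW.
  lra.
have e_small : 32 * e < D.
  have : e * 2 <= e * k by rewrite ler_wpM2l // ltW.
  lra.
have eD_le : e * D <= e by rewrite ler_piMr // ltW.
have ek_ge0 : 0 <= e / k by rewrite divr_ge0 ?ltW.
have c_ge0 : 0 <= (1 - e) * D by apply: mulr_ge0; lra.
have shift1 : e / k * ((1 - e) * D) <= q * ((1 - e) * D) := ler_wpM2r c_ge0 q_ge.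
have shift2 : e / k * (e / k * ((1 - e) * D)) <= q * (q * ((1 - e) * D)).
  exact: ler_pM ek_ge0 (mulr_ge0 ek_ge0 c_ge0) q_ge shift1.
split => //.
- have gap : 0 <= e / k * ((3 / 4 - e) * D - 2 * (e * k)).
    by rewrite mulr_ge0 //; lra.
  suff -> : D / (4 * k) * e = e / k * ((1 - e) * D) - 2 * e ^+ 2
                           - e / k * ((3 / 4 - e) * D - 2 * (e * k)) by lra.
  by field; rewrite gt_eqF.
- have gap : 0 < e / k * (e / k * ((1 - e) * D - 2 * (e * k * k))).
    by rewrite !mulr_gt0 ?invr_gt0 //; lra.
  suff -> : 2 * e ^+ 3 = e / k * (e / k * ((1 - e) * D))
                      - e / k * (e / k * ((1 - e) * D - 2 * (e * k * k))) by lra.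
  by field; rewrite gt_eqF.
Qed.

Theorem lemma3 (R : realType) (K : nat) (hK : (2 <= K)%N)
  (r : 'I_K -> R)
  (hr01 : forall a : 'I_K, 0 <= r a <= 1)
  (hrdec : forall a b : 'I_K, (val a < val b)%N -> r b < r a)
  (i1 j : 'I_K) (hi1 : val i1 = 0%N) (hj : (0 < val j)%N) :
  exists epsbar : R, 0 < epsbar /\
    forall (theta : R -> 'I_K -> R) (t : R), EG_flow_at r theta t ->
      let eps := 1 - softmax (theta t) j in
      0 < eps -> eps < epsbar -> eps / K%:R <= softmax (theta t) i1 ->
      (exists d : R,
         is_derive t 1
           (fun s => ln (softmax (theta s) i1 / softmax (theta s) j)) d /\
         (r i1 - r j) / (4 * K%:R) * eps <= d) /\
      (exists d : R,
         is_derive t 1 (fun s => 1 - softmax (theta s) j) d /\ 0 < d).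
Proof.
have K_gt0 : (0 < K)%N := ltnW hK.
have i1j : i1 != j by apply: contraTneq hj => <-; rewrite hi1.
have r1_max b : r b <= r i1.
  have [->|bi1] := eqVneq b i1; first exact: lexx.
  by apply/ltW/hrdec; rewrite hi1 lt0n -hi1 val_eqE.
have D_gt0 : 0 < r i1 - r j by rewrite subr_gt0 hrdec // hi1.
have D_le1 : r i1 - r j <= 1.
  by case/andP: (hr01 i1) => _ ?; case/andP: (hr01 j) => ? _; lra.
have k_ge2 : 2 <= K%:R :> R by rewrite (ler_nat R 2 K).
exists ((r i1 - r j) / (8 * K%:R ^+ 2)); split.
  by rewrite divr_gt0 // mulr_gt0 // exprn_gt0 // (lt_le_trans _ k_ge2).
move=> theta t flow /=; set p := softmax (theta t); set eps := 1 - p j.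
move=> eps_gt0 eps_lt p1_ge.
have [eps_small log_bound drift_bound] :=
  sector_bounds D_gt0 D_le1 k_ge2 eps_gt0 eps_lt p1_ge.
have pjE : p j = 1 - eps by rewrite /eps; ring.
have pj_ge : 1 <= 2 * p j by lra.
have w1_ge : p i1 * (1 - eps) * (r i1 - r j) <= EG_weight r (theta t) i1.
  by rewrite -pjE; exact: EG_weight_ge_max.
split.
  exists (EG_field r (theta t) i1 - EG_field r (theta t) j); split.
    exact: is_derive_ln_softmax_ratio K_gt0 _ _ _ _ _ flow.
  have := EG_field_gap_ge r (theta t) K_gt0 i1 j hr01 i1j pj_ge.
  rewrite -/p pjE; lra.
exists (p j * \sum_b p b * (EG_field r (theta t) b - EG_field r (theta t) j)); split.
  exact: is_derive_one_sub_softmax K_gt0 _ _ _ _ flow.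
rewrite mulr_gt0 ?softmax_gt0 //.
have := sum_EG_field_gap_ge r (theta t) K_gt0 i1 j hr01 i1j pj_ge.
have := ler_wpM2l (ltW (softmax_gt0 K_gt0 (theta t) i1)) w1_ge.
rewrite -/p pjE; lra.
Qed.
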